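(* Let $w_1,w_2\ge2$ be even. The $\mathbb Q$-linear map $(W_{w_1}^{\mathbb Q}\otimes1)\times V_{w_1,w_2}^{\mathbb Q}[I_D]\times(X_1^{w_1}\otimes W_{w_2}^{\mathbb Q})\to E_{w_1,w_2}^{\mathbb Q}$, $(P_H,P_D,P_V)\mapsto P_H-P_D+P_V$, is surjective and its kernel is the line spanned by $\big(1-X_1^{w_1},\,1-X_1^{w_1}X_2^{w_2},\,X_1^{w_1}(1-X_2^{w_2})\big)$. Consequently $\dim E_{w_1,w_2}^{\mathbb Q}=\dim W_{w_1}^{\mathbb Q}+\dim V_{w_1,w_2}^{\mathbb Q}[I_D]+\dim W_{w_2}^{\mathbb Q}-1$.
   Context: $\Gamma=PSL_2(\mathbb Z)$, $S=\pm\begin{pmatrix}0&-1\\1&0\end{pmatrix}$, $U=\pm\begin{pmatrix}0&1\\-1&1\end{pmatrix}$. For even $w$, $V_w^{\mathbb Q}$ is the space of rational polynomials of degree $\le w$ with action $\gamma.P(X)=(-cX+a)^wP\big(\frac{dX-b}{-cX+a}\big)$ for $\gamma=\pm\begin{pmatrix}a&b\\c&d\end{pmatrix}$; $W_w^{\mathbb Q}=\{P\in V_w^{\mathbb Q}:(1+S).P=(1+U+U^2).P=0\}$. $V_{w_1,w_2}^{\mathbb Q}$ is the space of rational polynomials in $X_1,X_2$ with $\deg_{X_j}\le w_j$ with diagonal action $(\gamma_1,\gamma_2).P(X_1,X_2)=(-c_1X_1+a_1)^{w_1}(-c_2X_2+a_2)^{w_2}P\big(\frac{d_1X_1-b_1}{-c_1X_1+a_1},\frac{d_2X_2-b_2}{-c_2X_2+a_2}\big)$.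 $V_{w_1,w_2}^{\mathbb Q}[I_D]=\{P:[(1,1)+(S,S)].P=[(1,1)+(U,U)+(U^2,U^2)].P=0\}$; $W_{w_1}^{\mathbb Q}\otimes1=\{P(X_1):P\in W_{w_1}^{\mathbb Q}\}$; $X_1^{w_1}\otimes W_{w_2}^{\mathbb Q}=\{X_1^{w_1}Q(X_2):Q\in W_{w_2}^{\mathbb Q}\}$; $E_{w_1,w_2}^{\mathbb Q}=(W_{w_1}^{\mathbb Q}\otimes1)+V_{w_1,w_2}^{\mathbb Q}[I_D]+(X_1^{w_1}\otimes W_{w_2}^{\mathbb Q})$. *)

From HB Require Import structures.
From mathcomp Require Import all_boot all_order all_algebra.
Unset Printing Implicit Defensive.
Import GRing.Theory.
Local Open Scope ring_scope.

Definition mx2 (a b c d : rat) : 'M[rat]_2 :=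
  \matrix_(i < 2, j < 2)
    (if (i : nat) == 0%N then (if (j : nat) == 0%N then a else b)
     else (if (j : nat) == 0%N then c else d)).

Definition matS : 'M[rat]_2 := mx2 0 (-1) 1 0.
Definition matU : 'M[rat]_2 := mx2 0 1 (-1) 1.

(* V_w^Q = polynomials of degree <= w, represented by the row vector
   (p_0, ..., p_w) of coefficients of X^0, ..., X^w.
   act_mx w g is the matrix of P |-> g.P  (P(X) = sum_i p_i X^i is sent to
   sum_i p_i (dX - b)^i (-cX + a)^(w-i)), acting on the right of rows. *)
Definition act_mx (w : nat) (g : 'M[rat]_2) : 'M[rat]_(w.+1) :=
  \matrix_(i < w.+1, k < w.+1)
    ((((g ord_max ord_max)%:P * 'X - (g ord0 ord_max)%:P) ^+ i
      * ((g ord0 ord0)%:P - (g ord_max ord0)%:P * 'X) ^+ (w - i))`_k).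

Definition actV (w : nat) (g : 'M[rat]_2) (v : 'rV[rat]_(w.+1)) : 'rV[rat]_(w.+1) :=
  v *m act_mx w g.

Definition Wsp (w : nat) : {vspace 'rV[rat]_(w.+1)} :=
  (lker (linfun (fun v : 'rV[rat]_(w.+1) => (v + actV w matS v)%R))
   :&: lker (linfun (fun v : 'rV[rat]_(w.+1) =>
                      (v + actV w matU v + actV w (matU *m matU) v)%R)))%VS.

(* V_{w1,w2}^Q: polynomials in X1, X2 with deg_{X1} <= w1, deg_{X2} <= w2,
   represented by the matrix whose (i,j) entry is the coefficient of
   X1^i X2^j. Diagonal action of (g1, g2). *)
Definition act2 (w1 w2 : nat) (g1 g2 : 'M[rat]_2)
  (P : 'M[rat]_(w1.+1, w2.+1)) : 'M[rat]_(w1.+1, w2.+1) :=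
  (act_mx w1 g1)^T *m P *m act_mx w2 g2.

Definition VID (w1 w2 : nat) : {vspace 'M[rat]_(w1.+1, w2.+1)} :=
  (lker (linfun (fun P : 'M[rat]_(w1.+1, w2.+1) => (P + act2 w1 w2 matS matS P)%R))
   :&: lker (linfun (fun P : 'M[rat]_(w1.+1, w2.+1) =>
          (P + act2 w1 w2 matU matU P + act2 w1 w2 (matU *m matU) (matU *m matU) P)%R)))%VS.

(* P(X) |-> P(X1) *)
Definition embH (w1 w2 : nat) (v : 'rV[rat]_(w1.+1)) : 'M[rat]_(w1.+1, w2.+1) :=
  \matrix_(i < w1.+1, j < w2.+1) (if (j : nat) == 0%N then v ord0 i else 0).

(* Q(X) |-> X1^w1 Q(X2) *)
Definition embV (w1 w2 : nat) (v : 'rV[rat]_(w2.+1)) : 'M[rat]_(w1.+1, w2.+1) :=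
  \matrix_(i < w1.+1, j < w2.+1) (if (i : nat) == w1 then v ord0 j else 0).

Definition WH (w1 w2 : nat) : {vspace 'M[rat]_(w1.+1, w2.+1)} :=
  (linfun (embH w1 w2) @: Wsp w1)%VS.

Definition WV (w1 w2 : nat) : {vspace 'M[rat]_(w1.+1, w2.+1)} :=
  (linfun (embV w1 w2) @: Wsp w2)%VS.

Definition Esp (w1 w2 : nat) : {vspace 'M[rat]_(w1.+1, w2.+1)} :=
  (WH w1 w2 + VID w1 w2 + WV w1 w2)%VS.

Definition mono (w1 w2 : nat) (i : 'I_(w1.+1)) (j : 'I_(w2.+1))
  : 'M[rat]_(w1.+1, w2.+1) := delta_mx i j.

Definition kerH (w1 w2 : nat) : 'M[rat]_(w1.+1, w2.+1) :=
  mono w1 w2 ord0 ord0 - mono w1 w2 ord_max ord0.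
Definition kerD (w1 w2 : nat) : 'M[rat]_(w1.+1, w2.+1) :=
  mono w1 w2 ord0 ord0 - mono w1 w2 ord_max ord_max.
Definition kerV (w1 w2 : nat) : 'M[rat]_(w1.+1, w2.+1) :=
  mono w1 w2 ord_max ord0 - mono w1 w2 ord_max ord_max.

From HB Require Import structures.
From mathcomp Require Import all_boot all_order all_algebra.
From mathcomp Require Import zify.

Import GRing.Theory.
Local Open Scope ring_scope.

(* For even w, S swaps 1 and X^w, while U sends 1 |-> X^w |-> (X-1)^w and U^2
   sends 1 |-> (X-1)^w and X^w |-> 1; so the relator sums telescope on 1 - X^w
   and on 1 - X1^w1 X2^w2, which puts the generator of the line into the domain.
   Conversely, if P_H - P_D + P_V = 0 then P_D = a(X1) + X1^w1 b(X2) with a, b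
   in W. Since S acts on coefficients by c_(k,l) |-> +-c_(w1-k,w2-l), the
   relation (1 + S) P_D = 0 alone forces all coefficients of a and b except the
   extreme ones to vanish and b(0) = a(0); so (a, b) is a multiple of
   (1 - X^w1, 1 - X^w2). The dimension formula follows because the first two
   summands of E meet trivially and the third meets their sum in the line
   spanned by X1^w1 (1 - X2^w2). *)

Lemma linfun_linearE (R : nzRingType) (aT rT : vectType R) (f : aT -> rT) :
  linear f -> linfun f =1 f.
Proof.
move=> fL; pose g : {linear aT -> rT} := HB.pack f (GRing.isLinear.Build _ _ _ _ f fL).
exact: (lfunE g).
Qed.

Lemma linear_id {R : nzRingType} {aT : lmodType R} : linear (fun v : aT => v).
Proof. by []. Qed.

Lemma linear_add_fun {R : nzRingType} {aT rT : lmodType R} {f g : aT -> rT} :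
  linear f -> linear g -> linear (fun v => f v + g v).
Proof. by move=> fL gL k x y; rewrite fL gL scalerDr addrACA. Qed.

Lemma dimv_img_inj (K : fieldType) (aT rT : vectType K) (f : {linear aT -> rT})
    (U : {vspace aT}) :
  injective f -> \dim (linfun f @: U) = \dim U.
Proof.
move=> f_inj; apply: limg_dim_eq.
suff /eqP -> : lker (linfun f) == 0%VS by rewrite capv0.
by apply/lker0P => x y; rewrite !lfunE; apply: f_inj.
Qed.

Lemma dimv_sum3_kernel_line {K : fieldType} {vT : vectType K}
    {A B C : {vspace vT}} {x y z : vT} :
  x \in A -> y \in B -> z \in C -> z != 0 -> x + y + z = 0 ->
  (forall a b c, a \in A -> b \in B -> c \in C -> a + b + c = 0 ->
     exists t, [/\ a = t *: x, b = t *: y & c = t *: z]) ->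
  (\dim (A + B + C) + 1 = \dim A + \dim B + \dim C)%N.
Proof.
move=> xA yB zC z_neq0 xyz0 ker.
have capAB : (A :&: B = 0)%VS.
  apply/eqP; rewrite -subv0; apply/subvP => a /memv_capP [aA aB].
  have [|t [-> _ /esym/eqP]] := ker a (- a) 0 aA (ltac:(by rewrite rpredN)) (mem0v _).
    by rewrite subrr add0r.
  by rewrite scaler_eq0 (negbTE z_neq0) orbF => /eqP->; rewrite scale0r mem0v.
have capABC : ((A + B) :&: C = <[z]>)%VS.
  apply/eqP; rewrite eqEsubv -memvE memv_cap zC andbT; apply/andP; split.
    apply/subvP => c /memv_capP [/memv_addP [a aA [b bB ->]] cC].
    have [|t [_ _ /eqP]] := ker a b (- (a + b)) aA bB (ltac:(by rewrite rpredN)).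
      by rewrite subrr.
    by rewrite eqr_oppLR => /eqP->; rewrite rpredN memvZ ?memv_line.
  move/eqP: xyz0; rewrite addrC addr_eq0 => /eqP->.
  by rewrite opprD memv_add // rpredN.
have := dimv_sum_cap (A + B) C; rewrite capABC dim_vline z_neq0.
have := dimv_sum_cap A B; rewrite capAB dimv0 addn0.
lia.
Qed.

Lemma actV_linear w g : linear (actV w g).
Proof. by move=> k x y; rewrite /actV mulmxDl -scalemxAl. Qed.

HB.instance Definition _ w g := GRing.isLinear.Build rat _ _ _ (actV w g) (actV_linear w g).

Lemma act2_linear w1 w2 g1 g2 : linear (act2 w1 w2 g1 g2).
Proof. by move=> k x y; rewrite /act2 mulmxDr mulmxDl -scalemxAr -scalemxAl. Qed.

HB.instance Definition _ w1 w2 g1 g2 :=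
  GRing.isLinear.Build rat _ _ _ (act2 w1 w2 g1 g2) (act2_linear w1 w2 g1 g2).

Lemma embH_linear w1 w2 : linear (embH w1 w2).
Proof. by move=> k x y; apply/matrixP=> i j; rewrite !mxE; case: ifP; rewrite ?mulr0 ?addr0. Qed.

HB.instance Definition _ w1 w2 :=
  GRing.isLinear.Build rat _ _ _ (embH w1 w2) (embH_linear w1 w2).

Lemma embV_linear w1 w2 : linear (embV w1 w2).
Proof. by move=> k x y; apply/matrixP=> i j; rewrite !mxE; case: ifP; rewrite ?mulr0 ?addr0. Qed.

HB.instance Definition _ w1 w2 :=
  GRing.isLinear.Build rat _ _ _ (embV w1 w2) (embV_linear w1 w2).

Lemma mem_Wsp w v : (v \in Wsp w) =
  (v + actV w matS v == 0) && (v + actV w matU v + actV w (matU *m matU) v == 0).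
Proof.
have L := actV_linear w; rewrite memv_cap !memv_ker !linfun_linearE //.
  exact: linear_add_fun (linear_add_fun linear_id (L _)) (L _).
exact: linear_add_fun linear_id (L _).
Qed.

Lemma mem_VID w1 w2 P : (P \in VID w1 w2) =
  (P + act2 w1 w2 matS matS P == 0) &&
  (P + act2 w1 w2 matU matU P + act2 w1 w2 (matU *m matU) (matU *m matU) P == 0).
Proof.
have L := act2_linear w1 w2; rewrite memv_cap !memv_ker !linfun_linearE //.
  exact: linear_add_fun (linear_add_fun linear_id (L _ _)) (L _ _).
exact: linear_add_fun linear_id (L _ _).
Qed.

Lemma mem_WH w1 w2 P :
  reflect (exists2 a, a \in Wsp w1 & P = embH w1 w2 a) (P \in WH w1 w2).
Proof. by apply: (iffP memv_imgP) => -[a aW ->]; exists a; rewrite ?lfunE. Qed.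

Lemma mem_WV w1 w2 P :
  reflect (exists2 b, b \in Wsp w2 & P = embV w1 w2 b) (P \in WV w1 w2).
Proof. by apply: (iffP memv_imgP) => -[b bW ->]; exists b; rewrite ?lfunE. Qed.

Lemma dim_WH w1 w2 : \dim (WH w1 w2) = \dim (Wsp w1).
Proof.
apply: dimv_img_inj => x y /matrixP xy; apply/rowP => i.
by have := xy i ord0; rewrite !mxE ord1.
Qed.

Lemma dim_WV w1 w2 : \dim (WV w1 w2) = \dim (Wsp w2).
Proof.
apply: dimv_img_inj => x y /matrixP xy; apply/rowP => j.
by have := xy ord_max j; rewrite !mxE eqxx ord1.
Qed.

Lemma actV_delta w g i : actV w g (delta_mx 0 i) = row i (act_mx w g).
Proof. by rewrite /actV -rowE. Qed.

Lemma act2_delta w1 w2 g1 g2 i j : act2 w1 w2 g1 g2 (delta_mx i j) =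
  (row i (act_mx w1 g1))^T *m row j (act_mx w2 g2).
Proof.
by rewrite /act2 !rowE trmx_mul trmx_delta -!mulmxA (mulmxA (delta_mx i 0)) mul_delta_mx.
Qed.

Lemma row0_act_mx w g : row 0 (act_mx w g) =
  \row_k ((((g ord0 ord0)%:P - (g ord_max ord0)%:P * 'X) ^+ w)`_k).
Proof. by apply/rowP=> k; rewrite !mxE /= expr0 mul1r subn0. Qed.

Lemma row_max_act_mx w g : row ord_max (act_mx w g) =
  \row_k ((((g ord_max ord_max)%:P * 'X - (g ord0 ord_max)%:P) ^+ w)`_k).
Proof. by apply/rowP=> k; rewrite !mxE /= subnn expr0 mulr1. Qed.

Lemma row0_act_matS w : ~~ odd w -> row 0 (act_mx w matS) = delta_mx 0 ord_max.
Proof.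
move=> ew; rewrite row0_act_mx !mxE /= polyC0 polyC1 mul1r sub0r exprNn.
rewrite -signr_odd (negbTE ew) expr0 mul1r.
by apply/rowP=> k; rewrite !mxE coefXn.
Qed.

Lemma row_max_act_matS w : row ord_max (act_mx w matS) = delta_mx 0 0.
Proof.
rewrite row_max_act_mx !mxE /= polyC0 mul0r polyCN opprK add0r polyC1 expr1n.
by apply/rowP=> -[[|k] hk]; rewrite !mxE coefC.
Qed.

Lemma row0_act_matU w : row 0 (act_mx w matU) = delta_mx 0 ord_max.
Proof.
rewrite row0_act_mx !mxE /= polyC0 polyCN polyC1 mulN1r sub0r opprK.
by apply/rowP=> k; rewrite !mxE coefXn.
Qed.

Lemma matU2E : matU *m matU = mx2 (-1) 1 (-1) 0.
Proof.
apply/matrixP=> -[[|[|i]] hi] -[[|[|j]] hj] //.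
all: rewrite !mxE !big_ord_recr big_ord0 /= !mxE /=;
by rewrite ?mul0r ?mulr0 ?add0r ?addr0 ?mul1r ?mulr1 ?addNr.
Qed.

Lemma row_max_act_matU w :
  row ord_max (act_mx w matU) = row 0 (act_mx w (matU *m matU)).
Proof.
rewrite matU2E row_max_act_mx row0_act_mx !mxE /=.
by rewrite polyCN polyC1 mul1r mulN1r opprK addrC.
Qed.

Lemma row_max_act_matU2 w :
  ~~ odd w -> row ord_max (act_mx w (matU *m matU)) = delta_mx 0 0.
Proof.
move=> ew; rewrite matU2E row_max_act_mx !mxE /=.
rewrite polyC0 mul0r polyC1 sub0r -signr_odd (negbTE ew) expr0.
by apply/rowP=> -[[|k] hk]; rewrite !mxE coefC.
Qed.

Lemma relators_kill_sub (V : zmodType) (s u u2 : V -> V) (e0 e1 f : V) :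
  {morph s : x y / x - y} -> {morph u : x y / x - y} -> {morph u2 : x y / x - y} ->
  s e0 = e1 -> s e1 = e0 -> u e0 = e1 -> u e1 = f -> u2 e0 = f -> u2 e1 = e0 ->
  (e0 - e1 + s (e0 - e1) == 0) && (e0 - e1 + u (e0 - e1) + u2 (e0 - e1) == 0).
Proof.
move=> sB uB u2B s0 s1 u0 u1 u20 u21; rewrite sB uB u2B s0 s1 u0 u1 u20 u21.
by rewrite !addrA !subrK subrr !eqxx.
Qed.

Definition one_subXn w : 'rV[rat]_(w.+1) := delta_mx 0 0 - delta_mx 0 ord_max.

Lemma one_subXn_Wsp w : ~~ odd w -> one_subXn w \in Wsp w.
Proof.
move=> ew; rewrite mem_Wsp /one_subXn; apply: relators_kill_sub; try exact: raddfB.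
all: rewrite actV_delta ?row0_act_matS ?row_max_act_matS ?row0_act_matU //.
all: by rewrite ?row_max_act_matU ?row_max_act_matU2.
Qed.

Lemma kerD_VID w1 w2 : ~~ odd w1 -> ~~ odd w2 -> kerD w1 w2 \in VID w1 w2.
Proof.
move=> ew1 ew2; rewrite mem_VID /kerD /mono; apply: relators_kill_sub; try exact: raddfB.
all: rewrite act2_delta ?row0_act_matS ?row_max_act_matS ?row0_act_matU //.
all: rewrite ?row_max_act_matU ?row_max_act_matU2 ?trmx_delta ?mul_delta_mx //.
Qed.

Lemma act_mx_matSE w (i k : 'I_w.+1) :
  act_mx w matS i k = (i == rev_ord k)%:R * (-1) ^+ k.
Proof.
rewrite !mxE /= polyC0 !mul0r polyCN opprK add0r polyC1 expr1n mul1r sub0r mul1r.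
rewrite -scaleN1r exprZn coefZ coefXn.
have -> : (k == (w - i)%N :> nat) = (i == rev_ord k).
  by rewrite -val_eqE /=; apply/eqP/eqP; have := ltn_ord i; have := ltn_ord k; lia.
by case: eqP => [->|_]; rewrite ?mulr0 ?mul0r // mulr1 mul1r /= subKn // -ltnS.
Qed.

Lemma sum_act_mx_matS w (F : 'I_w.+1 -> rat) k :
  \sum_i act_mx w matS i k * F i = (-1) ^+ k * F (rev_ord k).
Proof.
rewrite (bigD1 (rev_ord k)) //= big1 => [|i /negbTE ik]; last first.
  by rewrite act_mx_matSE ik mul0r mul0r.
by rewrite act_mx_matSE eqxx mul1r addr0.
Qed.

Lemma actV_matSE w v k : actV w matS v ord0 k = (-1) ^+ k * v ord0 (rev_ord k).
Proof.
rewrite mxE -sum_act_mx_matS; apply: eq_bigr => i _; exact: mulrC.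
Qed.

Lemma act2_matSE w1 w2 P k l :
  act2 w1 w2 matS matS P k l = (-1) ^+ k * (-1) ^+ l * P (rev_ord k) (rev_ord l).
Proof.
rewrite mxE (eq_bigr _ (fun j _ => mulrC _ _)) sum_act_mx_matS mxE.
rewrite (eq_bigr _ (fun i _ => congr1 (fun x => x * _) (mxE _ _ _ _))).
by rewrite sum_act_mx_matS mulrCA mulrA.
Qed.

Lemma Wsp_coef_relS w v k : v \in Wsp w -> v ord0 k + (-1) ^+ k * v ord0 (rev_ord k) = 0.
Proof.
rewrite mem_Wsp => /andP [/eqP/matrixP/(_ ord0 k) + _].
by rewrite mxE actV_matSE mxE.
Qed.

Lemma VID_coef_relS w1 w2 P k l : P \in VID w1 w2 ->
  P k l + (-1) ^+ k * (-1) ^+ l * P (rev_ord k) (rev_ord l) = 0.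
Proof.
rewrite mem_VID => /andP [/eqP/matrixP/(_ k l) + _].
by rewrite mxE act2_matSE mxE.
Qed.

Lemma rev_ord0 n : rev_ord (ord0 : 'I_n.+1) = ord_max.
Proof. by apply: val_inj => /=; rewrite subn1. Qed.

Lemma Wsp_last_coef w v : v \in Wsp w -> v ord0 ord_max = - v ord0 ord0.
Proof.
move/(@Wsp_coef_relS w v ord0); rewrite expr0 mul1r rev_ord0 => /eqP.
by rewrite addrC addr_eq0 => /eqP.
Qed.

Lemma Wsp_eq_one_subXn w v : (0 < w)%N -> v \in Wsp w ->
  (forall k : 'I_w.+1, (0 < k < w)%N -> v ord0 k = 0) ->
  v = v ord0 ord0 *: one_subXn w.
Proof.
move=> w_gt0 vW vmid; apply/rowP => k; rewrite !mxE !eqxx /= -!val_eqE /=.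
have [->|k_neq0] := eqVneq k ord0; first by rewrite /= ltn_eqF // subr0 mulr1.
have [->|k_neq_w] := eqVneq k ord_max.
  by rewrite /= eqxx gtn_eqF // Wsp_last_coef // sub0r mulrN1.
rewrite -!val_eqE /= in k_neq0 k_neq_w.
rewrite (negbTE k_neq0) (negbTE k_neq_w) subrr mulr0 [LHS]vmid //.
by rewrite lt0n k_neq0 ltn_neqAle k_neq_w -ltnS ltn_ord.
Qed.

Lemma kerH_embH w1 w2 : kerH w1 w2 = embH w1 w2 (one_subXn w1).
Proof.
apply/matrixP => i j; rewrite !mxE -!val_eqE /=.
by case: (nat_of_ord j == 0%N); rewrite ?andbT ?andbF ?subrr.
Qed.

Lemma kerV_embV w1 w2 : kerV w1 w2 = embV w1 w2 (one_subXn w2).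
Proof.
apply/matrixP => i j; rewrite !mxE -!val_eqE /=.
by case: (nat_of_ord i == w1); rewrite ?andbT ?andbF ?subrr.
Qed.

Lemma kerH_add_kerV w1 w2 : kerH w1 w2 + kerV w1 w2 = kerD w1 w2.
Proof. by rewrite addrA subrK. Qed.

Lemma kerV_neq0 w1 w2 : (0 < w2)%N -> kerV w1 w2 != 0.
Proof.
move=> w2_gt0; apply/eqP => /matrixP/(_ ord_max ord0)/eqP.
have max_neq0 : (ord0 == ord_max :> 'I_w2.+1) = false by rewrite -val_eqE /= ltn_eqF.
by rewrite !mxE /= !eqxx max_neq0 subr0 oner_eq0.
Qed.

Section Kernel.

Context {w1 w2 : nat} (w1_gt0 : (0 < w1)%N) (w2_gt0 : (0 < w2)%N).

Lemma embH_add_embV_VID_coef a b : a \in Wsp w1 ->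
  embH w1 w2 a + embV w1 w2 b \in VID w1 w2 ->
  [/\ forall k : 'I_w1.+1, (0 < k < w1)%N -> a ord0 k = 0,
      forall l : 'I_w2.+1, (0 < l < w2)%N -> b ord0 l = 0
    & b ord0 ord0 = a ord0 ord0].
Proof.
move=> aW /VID_coef_relS PD; split.
- move=> k k_mid; have := PD k ord0; rewrite !mxE /=.
  do 3 (rewrite ifF; last by apply/negbTE/eqP; lia).
  by rewrite !addr0 mulr0 addr0.
- move=> l l_mid; have := PD ord_max l; rewrite !mxE /= eqxx.
  do 3 (rewrite ifF; last by apply/negbTE/eqP; lia).
  by rewrite !add0r mulr0 addr0.
have := PD ord_max ord0; rewrite !mxE /= !eqxx.
do 2 (rewrite ifF; last by apply/negbTE/eqP; lia).
rewrite Wsp_last_coef // addr0 mulr0 addr0 => /eqP.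
by rewrite addrC addr_eq0 opprK => /eqP.
Qed.

Lemma kernel_line PH PD PV :
  PH \in WH w1 w2 -> PD \in VID w1 w2 -> PV \in WV w1 w2 ->
  PH - PD + PV = 0 <->
  exists t : rat,
    [/\ PH = t *: kerH w1 w2, PD = t *: kerD w1 w2 & PV = t *: kerV w1 w2].
Proof.
move=> /mem_WH [a aW ->] PD_VID /mem_WV [b bW ->]; split; last first.
  case=> t [-> -> ->].
  by rewrite -kerH_add_kerV -scalerBr -scalerDr opprD addNKr addNr scaler0.
move=> /eqP; rewrite addrAC subr_eq0 => /eqP PDE; rewrite -PDE in PD_VID.
have [amid bmid b0] := embH_add_embV_VID_coef _ _ aW PD_VID.
have embHE : embH w1 w2 a = a ord0 ord0 *: kerH w1 w2.
  by rewrite kerH_embH -linearZ -Wsp_eq_one_subXn.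
have embVE : embV w1 w2 b = a ord0 ord0 *: kerV w1 w2.
  by rewrite kerV_embV -linearZ -b0 -Wsp_eq_one_subXn.
by exists (a ord0 ord0); rewrite -PDE embHE embVE -scalerDr kerH_add_kerV.
Qed.

End Kernel.

Theorem proposition19 (w1 w2 : nat) (hw1 : (2 <= w1)%N) (hw2 : (2 <= w2)%N)
    (ew1 : ~~ odd w1) (ew2 : ~~ odd w2) :
  [/\ forall P, P \in Esp w1 w2 ->
        exists PH PD PV, [/\ PH \in WH w1 w2, PD \in VID w1 w2, PV \in WV w1 w2
                           & P = PH - PD + PV],
      [/\ kerH w1 w2 \in WH w1 w2, kerD w1 w2 \in VID w1 w2 & kerV w1 w2 \in WV w1 w2],
      (forall PH PD PV, PH \in WH w1 w2 -> PD \in VID w1 w2 -> PV \in WV w1 w2 ->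
        (PH - PD + PV = 0 <->
         exists t : rat, [/\ PH = t *: kerH w1 w2, PD = t *: kerD w1 w2
                           & PV = t *: kerV w1 w2]))
    & (\dim (Esp w1 w2) + 1 = \dim (Wsp w1) + \dim (VID w1 w2) + \dim (Wsp w2))%N].
Proof.
have [w1_gt0 w2_gt0] := (ltnW hw1, ltnW hw2).
have kH : kerH w1 w2 \in WH w1 w2.
  by apply/mem_WH; exists (one_subXn w1); rewrite ?one_subXn_Wsp ?kerH_embH.
have kD : kerD w1 w2 \in VID w1 w2 by apply: kerD_VID.
have kV : kerV w1 w2 \in WV w1 w2.
  by apply/mem_WV; exists (one_subXn w2); rewrite ?one_subXn_Wsp ?kerV_embV.
have ker := kernel_line w1_gt0 w2_gt0.
have rpredN_kD : - kerD w1 w2 \in VID w1 w2 by rewrite rpredN.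
split=> //.
  move=> P /memv_addP [_ /memv_addP [PH PH_WH [PD PD_VID ->]] [PV PV_WV ->]].
  by exists PH, (- PD), PV; rewrite opprK rpredN.
rewrite -(dim_WH w1 w2) -(dim_WV w1 w2) /Esp.
apply: (dimv_sum3_kernel_line kH rpredN_kD kV (kerV_neq0 w1 w2 w2_gt0)).
- by rewrite -kerH_add_kerV opprD addNKr addNr.
move=> a b c aWH bVID cWV abc.
have [+ _] := ker a (- b) c aWH (ltac:(by rewrite rpredN)) cWV.
rewrite opprK => /(_ abc) [t [-> bE ->]].
by exists t; rewrite scalerN -bE opprK.
Qed.
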